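(* As formal power series, \[ B^{(\mathrm{pk},\mathrm{des})}\Big(xt,\,y,\,\tfrac1t\Big)\,B^{(\mathrm{pk},\mathrm{des})}(x,y,t)=(1+t)\,P^{(\mathrm{pk},\mathrm{des})}(x,y,t)-t. \]
   Context: For a permutation $\pi=\pi_1\cdots\pi_n$ of $[n]$, $\operatorname{des}(\pi)$ is the number of $1\le i\le n-1$ with $\pi_i>\pi_{i+1}$, $\operatorname{asc}(\pi)$ the number with $\pi_i<\pi_{i+1}$, and $\operatorname{pk}(\pi)$ the number of $2\le i\le n-1$ with $\pi_{i-1}<\pi_i>\pi_{i+1}$. A ballot permutation is one with $\operatorname{asc}(\pi_1\cdots\pi_i)\ge\operatorname{des}(\pi_1\cdots\pi_i)$ for all $i$; $\mathscr B_n$ is the set of ballot permutations of $[n]$, $\mathscr B_0=\mathcal S_0=\{\epsilon\}$ (empty permutation, with all statistics $0$). Define $P^{(\mathrm{pk},\mathrm{des})}(x,y,t)=\sum_{n\ge0}\sum_{\pi\in\mathcal S_n} y^{\operatorname{pk}(\pi)}t^{\operatorname{des}(\pi)}\frac{x^n}{n!}$ and $B^{(\mathrm{pk},\mathrm{des})}(x,y,t)=\sum_{n\ge0}\sum_{\pi\in\mathscr B_n} y^{\operatorname{pk}(\pi)}t^{\operatorname{des}(\pi)}\frac{x^n}{n!}$. *)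

From HB Require Import structures.
From mathcomp Require Import all_boot all_order all_algebra all_fingroup.
From mathcomp Require Import mpoly.
Set Implicit Arguments. Unset Strict Implicit. Unset Printing Implicit Defensive.
Import GRing.Theory.

(* Permutations of [n] are modelled by 'S_n = {perm 'I_n}; the one-line word of
   p is p(0) p(1) ... p(n-1) (values in {0..n-1}, order-isomorphic to [n]). *)
Definition word n (p : 'S_n) : seq nat := [seq val (p i) | i <- enum 'I_n].

Definition desw (s : seq nat) : nat :=
  count (fun i => nth 0 s i.+1 < nth 0 s i)%N (iota 0 (size s).-1).
Definition ascw (s : seq nat) : nat :=
  count (fun i => nth 0 s i < nth 0 s i.+1)%N (iota 0 (size s).-1).
Definition pkw (s : seq nat) : nat :=
  count (fun i => (nth 0 s i < nth 0 s i.+1) && (nth 0 s i.+2 < nth 0 s i.+1))%N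
        (iota 0 (size s - 2)).

Definition ballot (s : seq nat) : bool :=
  all (fun i => desw (take i s) <= ascw (take i s))%N (iota 0 (size s).+1).

Local Open Scope ring_scope.

Notation PR := {mpoly rat[2]}.
Definition yv : PR := 'X_(@ord0 1).
Definition tv : PR := 'X_(@ord_max 1).

(* coefficient of x^n/n! in P^{(pk,des)}(x,y,t) *)
Definition Pcoef (n : nat) : PR :=
  \sum_(p : 'S_n) yv ^+ pkw (word p) * tv ^+ desw (word p).
(* coefficient of x^n/n! in B^{(pk,des)}(x,y,t) *)
Definition Bcoef (n : nat) : PR :=
  \sum_(p : 'S_n | ballot (word p)) yv ^+ pkw (word p) * tv ^+ desw (word p).
(* coefficient of x^n/n! in B^{(pk,des)}(xt,y,1/t):
   y^pk t^(-des) (xt)^n = y^pk t^(n - des) x^n, and des <= n so the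
   (natural-number) exponent n - des is exact. *)
Definition Bcoef_sub (n : nat) : PR :=
  \sum_(p : 'S_n | ballot (word p)) yv ^+ pkw (word p) * tv ^+ (n - desw (word p)).

(* ordinary coefficient of x^n, i.e. divided by n! *)
Definition ogf_coef (F : nat -> PR) (n : nat) : PR := ((n`!)%:R^-1 : rat) *: F n.

(* A permutation word s is read through its up-down path x = steps s
   (true = ascent): descents are down steps, peaks are factors (up, down), and
   s is ballot iff the height of x never falls below its initial value.  After
   standardization, the coefficient of x^n/n! on the left is the sum, over the
   words s of [n] and the cuts k, of w'(s_1..s_k) w(s_k+1..s_n), where w weighs
   ballot words and w' weighs words whose reversal is ballot, i.e. whose path
   ends at its minimal height.  A cut 0 < k < n deletes the step between s_k
   and s_k+1, and the two pieces have the required shapes exactly when that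
   step is the down step into the first minimum of the height, or the up step
   out of the last minimum; the cuts k = 0 and k = n account for minima at the
   ends.  Every path has exactly one first and one last minimum, so every
   nonempty s contributes (1 + t) y^pk t^des, while the empty word gives 1. *)

From HB Require Import structures.
From mathcomp Require Import all_boot all_order all_algebra all_fingroup.
From mathcomp Require Import mpoly.
From mathcomp Require Import zify ring.
Set Implicit Arguments. Unset Strict Implicit. Unset Printing Implicit Defensive.
Import Order.TTheory GRing.Theory Num.Theory.

Lemma all_iotaP (P : pred nat) a n :
  reflect (forall m, a <= m < a + n -> P m) (all P (iota a n)).
Proof.
apply: (iffP allP) => H m; last by rewrite mem_iota => /H.
by move=> Hm; apply: H; rewrite mem_iota.
Qed.

Section Argmin.
Variables (d : Order.disp_t) (T : orderType d) (f : nat -> T) (N : nat).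

Definition is_min_at p := (p <= N) && all (fun m => f p <= f m)%O (iota 0 N.+1).
Definition first_argmin p := is_min_at p && all (fun m => f p < f m)%O (iota 0 p).
Definition last_argmin p :=
  is_min_at p && all (fun m => f p < f m)%O (iota p.+1 (N - p)).

Lemma first_argmin_uniq p q : first_argmin p -> first_argmin q -> p = q.
Proof.
wlog pq : p q / p <= q => [W Hp Hq|].
  by case: (leqP p q) => [pq | /ltnW qp]; [exact: W | exact/esym/W].
move=> /andP[/andP[_ /all_iotaP minp] _] /andP[/andP[qN _] /all_iotaP firstq].
case: ltngtP pq => // lt_pq _.
by move: (firstq p lt_pq); rewrite ltNge minp //; lia.
Qed.

Lemma last_argmin_uniq p q : last_argmin p -> last_argmin q -> p = q.
Proof.
wlog pq : p q / p <= q => [W Hp Hq|].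
  by case: (leqP p q) => [pq | /ltnW qp]; [exact: W | exact/esym/W].
move=> /andP[_ /all_iotaP lastp] /andP[/andP[qN /all_iotaP minq] _].
case: ltngtP pq => // lt_pq _.
by move: (lastp q ltac:(lia)); rewrite ltNge minq //; lia.
Qed.

Lemma exists_min_at : exists p, is_min_at p.
Proof.
have [/= p _ minp] := @arg_minP _ _ 'I_N.+1 ord0 xpredT (f \o val) isT.
exists p; rewrite /is_min_at -ltnS ltn_ord; apply/all_iotaP => m /= mN.
exact: (minp (Ordinal mN)).
Qed.

Lemma exists_first_argmin : exists p, first_argmin p.
Proof.
have [p minp] := exists_min_at.
case: (ex_minnP (ex_intro _ p minp)) => {}p {}minp leastp; exists p.
rewrite /first_argmin minp; apply/all_iotaP => m /= lt_mp.
rewrite ltNge; apply/negP => le_fmp.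
suff /leastp : is_min_at m by rewrite leqNgt lt_mp.
case/andP: minp => pN /all_iotaP fp_min.
rewrite /is_min_at (ltnW (leq_trans lt_mp pN)).
by apply/all_iotaP => j /fp_min; apply: le_trans.
Qed.

Lemma exists_last_argmin : exists p, last_argmin p.
Proof.
have [p minp] := exists_min_at.
have boundN q : is_min_at q -> q <= N by case/andP.
case: (ex_maxnP (ex_intro _ p minp) boundN) => {}p {}minp greatestp; exists p.
rewrite /last_argmin minp; apply/all_iotaP => m /andP[lt_pm mN].
rewrite ltNge; apply/negP => le_fmp.
suff /greatestp : is_min_at m by rewrite leqNgt lt_pm.
case/andP: minp => pN /all_iotaP fp_min.
rewrite addSn subnKC // ltnS in mN; rewrite /is_min_at mN.
by apply/all_iotaP => j /fp_min; apply: le_trans.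
Qed.

Lemma sum_indicator_unique (R : pzSemiRingType) (P : pred nat) K p :
  (forall q r, P q -> P r -> q = r) -> P p -> p < K ->
  (\sum_(i < K) (P i)%:R = 1 :> R)%R.
Proof.
move=> Puniq Pp lt_pK; rewrite (bigD1 (Ordinal lt_pK)) //= Pp big1 ?addr0 //.
move=> i /eqP ne_ip; case Pi: (P i) => //; case: ne_ip; apply: val_inj.
exact: Puniq.
Qed.

Lemma sum_first_argmin (R : pzSemiRingType) K : N < K ->
  (\sum_(i < K) (first_argmin i)%:R = 1 :> R)%R.
Proof.
move=> NK; have [p firstp] := exists_first_argmin.
apply: (@sum_indicator_unique R first_argmin _ p first_argmin_uniq firstp).
by case/andP: firstp => /andP[pN _] _; apply: leq_ltn_trans NK.
Qed.

Lemma sum_last_argmin (R : pzSemiRingType) K : N < K ->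
  (\sum_(i < K) (last_argmin i)%:R = 1 :> R)%R.
Proof.
move=> NK; have [p lastp] := exists_last_argmin.
apply: (@sum_indicator_unique R last_argmin _ p last_argmin_uniq lastp).
by case/andP: lastp => /andP[pN _] _; apply: leq_ltn_trans NK.
Qed.

End Argmin.

Section LatticePaths.
Implicit Types (x z : seq bool).

Definition height x m : int :=
  (count id (take m x))%:Z - (count negb (take m x))%:Z.

Definition ballot_path x :=
  all (fun m => count negb (take m x) <= count id (take m x)) (iota 0 (size x).+1).
Definition coballot_path x :=
  all (fun m => count id (drop m x) <= count negb (drop m x)) (iota 0 (size x).+1).

Lemma height_step x m : m < size x ->
  height x m.+1 = (height x m + (if nth false x m then 1 else -1))%R.
Proof.
move=> mx; rewrite /height (take_nth false mx) -cats1 !count_cat /=.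
by case: (nth false x m) => /=; lia.
Qed.

Lemma height_drop x j m : height (drop j x) m = (height x (j + m) - height x j)%R.
Proof. rewrite /height takeD !count_cat; lia. Qed.

Lemma height_take x i m : m <= i -> height (take i x) m = height x m.
Proof. by move=> mi; rewrite /height take_takel. Qed.

Lemma ballot_pathE x :
  ballot_path x = all (fun m => 0 <= height x m)%R (iota 0 (size x).+1).
Proof. by apply: eq_all => m; rewrite subr_ge0 lez_nat. Qed.

Lemma coballot_pathE x :
  coballot_path x = all (fun m => height x (size x) <= height x m)%R (iota 0 (size x).+1).
Proof.
apply: eq_in_all => m; rewrite mem_iota /= ltnS => mx.
rewrite /height take_size -{3 4}(cat_take_drop m x) !count_cat; apply/idP/idP; lia.
Qed.

Lemma ballot_path_drop x j : j <= size x ->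
  reflect (forall m, j <= m <= size x -> (height x j <= height x m)%R)
          (ballot_path (drop j x)).
Proof.
move=> jx; rewrite ballot_pathE size_drop; apply: (iffP (all_iotaP _ _ _)) => H m.
- move=> /andP[jm mx]; have := H (m - j); rewrite height_drop subnKC // subr_ge0.
  by apply; lia.
- by rewrite add0n ltnS => mx; rewrite height_drop subr_ge0; apply: H; lia.
Qed.

Lemma coballot_path_take x i : i <= size x ->
  reflect (forall m, m <= i -> (height x i <= height x m)%R)
          (coballot_path (take i x)).
Proof.
move=> ix; rewrite coballot_pathE size_takel //; apply: (iffP (all_iotaP _ _ _)).
- by move=> H m mi; have := H m; rewrite !height_take // add0n ltnS mi; apply.
- by move=> H m; rewrite add0n ltnS => mi; rewrite !height_take //; apply: H.
Qed.

Lemma cut_down_first_argmin x i : i < size x ->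
  [&& coballot_path (take i x), ballot_path (drop i.+1 x) & ~~ nth false x i]
  = first_argmin (height x) (size x) i.+1.
Proof.
move=> ix; have step := height_step ix; apply/idP/idP.
- case/and3P => /(coballot_path_take (ltnW ix)) cob /(ballot_path_drop ix) bal down.
  rewrite (negbTE down) in step.
  rewrite /first_argmin /is_min_at ix; apply/andP; split; apply/all_iotaP => m.
  + rewrite add0n ltnS => mx; case: (leqP m i) => mi; last by apply: bal; lia.
    by have := cob m mi; lia.
  + by rewrite add0n ltnS => mi; have := cob m mi; lia.
- case/andP => /andP[_ /all_iotaP minx] /all_iotaP firstx.
  have down : ~~ nth false x i.
    by move: step (firstx i ltac:(lia)); case: (nth false x i) => //; lia.
  rewrite (negbTE down) in step; rewrite down andbT; apply/andP; split.
  + by apply/(coballot_path_take (ltnW ix)) => m mi; have := firstx m ltac:(lia); lia.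
  + by apply/(ballot_path_drop ix) => m /andP[im mx]; apply: minx; lia.
Qed.

Lemma cut_up_last_argmin x i : i < size x ->
  [&& coballot_path (take i x), ballot_path (drop i.+1 x) & nth false x i]
  = last_argmin (height x) (size x) i.
Proof.
move=> ix; have step := height_step ix; apply/idP/idP.
- case/and3P => /(coballot_path_take (ltnW ix)) cob /(ballot_path_drop ix) bal up.
  rewrite up in step.
  rewrite /last_argmin /is_min_at (ltnW ix); apply/andP; split; apply/all_iotaP => m.
  + rewrite add0n ltnS => mx; case: (leqP m i) => mi; first exact: cob.
    by have := bal m ltac:(lia); lia.
  + by move=> /andP[im mx]; have := bal m ltac:(lia); lia.
- case/andP => /andP[_ /all_iotaP minx] /all_iotaP lastx.
  have up : nth false x i.
    by move: step (lastx i.+1 ltac:(lia)); case: (nth false x i) => //; lia.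
  rewrite up in step; rewrite up andbT; apply/andP; split.
  + by apply/(coballot_path_take (ltnW ix)) => m mi; apply: minx; lia.
  + by apply/(ballot_path_drop ix) => m /andP[im mx]; have := lastx m ltac:(lia); lia.
Qed.

Lemma ballot_path_first_argmin x : ballot_path x = first_argmin (height x) (size x) 0.
Proof.
rewrite /first_argmin /is_min_at leq0n [X in _ && X]/= andbT andTb -[in LHS](drop0 x).
apply/(ballot_path_drop (leq0n _))/all_iotaP => H m; last by apply: H.
by rewrite add0n ltnS => mx; apply: H.
Qed.

Lemma coballot_path_last_argmin x :
  coballot_path x = last_argmin (height x) (size x) (size x).
Proof.
rewrite /last_argmin /is_min_at leqnn subnn [X in _ && X]/= andbT andTb.
rewrite -[in LHS](take_size x).
apply/(coballot_path_take (leqnn _))/all_iotaP => H m; last by apply: H.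
by rewrite add0n ltnS => mx; apply: H.
Qed.

Fixpoint peaks x := if x is a :: x' then (a && ~~ head a x') + peaks x' else 0.

Lemma peaks_cat x b z :
  peaks (x ++ b :: z) = peaks x + peaks z + (last b x && ~~ b) + (b && ~~ head b z).
Proof.
elim: x => [|a x IH] /=; first by case: b => /=; lia.
by rewrite IH; case: x {IH} => [|a' x] /=; [case: a; case: b => /=|]; lia.
Qed.

Lemma coballot_path_last x b : coballot_path x -> (last b x && ~~ b) = false.
Proof.
case/lastP: x => [|x l]; first by case: b.
move=> /allP /(_ (size x)); rewrite mem_iota size_rcons ltnS leqnSn.
by rewrite -cats1 drop_size_cat // last_cat /= => /(_ isT); case: l.
Qed.

Lemma ballot_path_head z b : ballot_path z -> (b && ~~ head b z) = false.
Proof.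
case: z => [|h z]; first by case: b.
by move=> /allP /(_ 1); rewrite mem_iota /= take0 => /(_ isT); case: h; case: b.
Qed.

End LatticePaths.

Section PathWeights.
Variables (R : comPzRingType) (y t : R).
Implicit Types (x : seq bool).
Local Open Scope ring_scope.

Definition path_weight x := y ^+ peaks x * t ^+ count negb x.
Definition ballot_weight x := if ballot_path x then path_weight x else 0.
Definition coballot_weight x := if coballot_path x then t * path_weight x else 0.

Lemma cut_weight x i : (i <= size x)%N ->
  coballot_weight (take i x) * ballot_weight (drop i.+1 x) =
  (first_argmin (height x) (size x) i.+1)%:R * path_weight x +
  (last_argmin (height x) (size x) i)%:R * (t * path_weight x).
Proof.
rewrite leq_eqVlt => /orP[/eqP-> | ix].
  have -> : first_argmin (height x) (size x) (size x).+1 = false.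
    by rewrite /first_argmin /is_min_at ltnn.
  rewrite take_size drop_oversize // -coballot_path_last_argmin /coballot_weight.
  rewrite /ballot_weight /path_weight /=.
  by case: coballot_path; rewrite /= ?mulr1n ?mulr0n; ring.
rewrite -cut_down_first_argmin // -cut_up_last_argmin //.
rewrite /coballot_weight /ballot_weight.
case cob: (coballot_path _); case bal: (ballot_path _);
  rewrite /= ?mul0r ?mulr0 ?addr0 //.
have x_cut : x = take i x ++ nth false x i :: drop i.+1 x.
  by rewrite -drop_nth // cat_take_drop.
have peaks_x : peaks x = (peaks (take i x) + peaks (drop i.+1 x))%N.
  by rewrite {1}x_cut peaks_cat (coballot_path_last _ cob) (ballot_path_head _ bal) !addn0.
have downs_x : count negb x =
    (count negb (take i x) + ~~ nth false x i + count negb (drop i.+1 x))%N.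
  by rewrite {1}x_cut count_cat /= addnA.
rewrite /path_weight peaks_x downs_x !exprD.
by case: (nth false x i); rewrite /= ?mulr1n ?mulr0n; ring.
Qed.

Lemma ballot_cut_decomposition x :
  ballot_weight x +
  \sum_(i < (size x).+1) coballot_weight (take i x) * ballot_weight (drop i.+1 x) =
  (1 + t) * path_weight x.
Proof.
pose first i := (first_argmin (height x) (size x) i)%:R : R.
have -> : ballot_weight x = first 0 * path_weight x.
  by rewrite /ballot_weight ballot_path_first_argmin /first; case: first_argmin;
    rewrite ?mul1r ?mul0r.
under eq_bigr => i _ do rewrite cut_weight 1?leq_ord //.
rewrite big_split /= -!mulr_suml sum_last_argmin // mul1r addrA -mulrDl.
have -> : first 0 + \sum_(i < (size x).+1) first i.+1 = \sum_(i < (size x).+2) first i.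
  by rewrite [RHS]big_ord_recl.
by rewrite sum_first_argmin // mul1r mulrDl mul1r.
Qed.

End PathWeights.

Section WordsAsPaths.
Implicit Types (s : seq nat) (x : seq bool).

Definition steps s : seq bool :=
  [seq nth 0 s i < nth 0 s i.+1 | i <- iota 0 (size s).-1].

Lemma size_steps s : size (steps s) = (size s).-1.
Proof. by rewrite size_map size_iota. Qed.

Lemma nth_steps s i : i < (size s).-1 ->
  nth false (steps s) i = (nth 0 s i < nth 0 s i.+1).
Proof. by move=> lt_i; rewrite (nth_map 0) ?size_iota // nth_iota. Qed.

Lemma uniq_nth_neq_next s i : uniq s -> i < (size s).-1 ->
  nth 0 s i != nth 0 s i.+1.
Proof.
move=> Us lt_i; have lt_Si : i.+1 < size s by rewrite -ltn_predRL.
by rewrite nth_uniq ?ltn_eqF // ltnW.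
Qed.

Lemma ascw_steps s : ascw s = count id (steps s).
Proof. by rewrite /ascw count_map. Qed.

Lemma desw_steps s : uniq s -> desw s = count negb (steps s).
Proof.
move=> Us; rewrite /desw count_map; apply: eq_in_count => i; rewrite mem_iota /=.
by move=> lt_i; have := uniq_nth_neq_next Us lt_i; case: ltngtP.
Qed.

Lemma peaks_nth x :
  peaks x = count (fun i => nth false x i && ~~ nth false x i.+1) (iota 0 (size x).-1).
Proof.
elim: x => [|a x IH] //; case: x IH => [|b x] IH; first by case: a.
rewrite -[peaks _]/((a && ~~ b) + peaks (b :: x)) IH /=.
by rewrite -[in RHS](addn0 1) iotaDl count_map.
Qed.

Lemma pkw_steps s : uniq s -> pkw s = peaks (steps s).
Proof.
move=> Us; rewrite peaks_nth /pkw size_steps -subn2; apply: eq_in_count => i.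
rewrite mem_iota /= => lt_i; rewrite !nth_steps; try lia.
have := @uniq_nth_neq_next s i.+1 Us ltac:(lia).
by case: (ltngtP (nth 0 s i.+1) (nth 0 s i.+2)); rewrite ?andbT ?andbF.
Qed.

Lemma steps_take s k : steps (take k s) = take k.-1 (steps s).
Proof.
rewrite /steps -map_take take_iota size_take_min.
have -> : (minn k (size s)).-1 = minn k.-1 (size s).-1 by lia.
apply/eq_in_map => i; rewrite mem_iota /= => lt_i; rewrite !nth_take //; lia.
Qed.

Lemma steps_drop s k : steps (drop k s) = drop k (steps s).
Proof.
rewrite /steps -map_drop drop_iota size_drop add0n.
have -> : (size s - k).-1 = (size s).-1 - k by lia.
have := iotaDl k 0 ((size s).-1 - k); rewrite addn0 => ->.
rewrite -map_comp; apply: eq_map => i /=.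
by rewrite !nth_drop addnS.
Qed.

Lemma ballot_steps s : uniq s -> ballot s = ballot_path (steps s).
Proof.
case: s => [//|a s] Us; rewrite /ballot /ballot_path size_steps.
apply/(all_iotaP _ _ _)/(all_iotaP _ _ _) => H m; rewrite add0n ltnS => mx.
- have := H m.+1; rewrite desw_steps ?ascw_steps ?steps_take ?take_uniq //.
  by apply; move: mx => /=; lia.
- rewrite desw_steps ?ascw_steps ?steps_take ?take_uniq //; apply: H; lia.
Qed.

Lemma steps_rev s : uniq s -> steps (rev s) = rev (map negb (steps s)).
Proof.
move=> Us; apply: (@eq_from_nth _ false).
  by rewrite size_rev size_map !size_steps size_rev.
move=> i; rewrite size_steps size_rev => lt_i.
rewrite nth_steps ?size_rev // !nth_rev ?size_map ?size_iota; try lia.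
rewrite (nth_map false) ?size_steps; last lia.
rewrite nth_steps; last lia.
have -> : (size s).-1 - i.+1 = size s - i.+2 by lia.
have -> : size s - i.+1 = (size s - i.+2).+1 by lia.
by have := @uniq_nth_neq_next s (size s - i.+2) Us ltac:(lia); case: ltngtP.
Qed.

Lemma steps_map (f : nat -> nat) s : {in s &, {mono f : a b / a < b}} ->
  steps (map f s) = steps s.
Proof.
move=> f_mono; rewrite /steps size_map; apply/eq_in_map => i.
rewrite mem_iota /= => lt_i; have lt_Si : i.+1 < size s by rewrite -ltn_predRL.
by rewrite !(nth_map 0) ?f_mono ?mem_nth // ltnW.
Qed.

Lemma peaks_rcons x b : peaks (rcons x b) = peaks x + (last b x && ~~ b).
Proof. by rewrite -cats1 peaks_cat /=; case: b; rewrite /= ?andbF; lia. Qed.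

Lemma peaks_rev_negb x : peaks (rev (map negb x)) = peaks x.
Proof.
elim: x => [|a x IH] //=; rewrite rev_cons peaks_rcons IH.
case: x {IH} => [|b x] /=; first by case: a.
by rewrite rev_cons last_rcons; case: a; case: b => /=; lia.
Qed.

Lemma count_rev_negb x : (count negb (rev (map negb x)) = count id x) *
                         (count id (rev (map negb x)) = count negb x).
Proof. by rewrite !count_rev !count_map; split; apply: eq_count; case. Qed.

Lemma ballot_path_rev_negb x : ballot_path (rev (map negb x)) = coballot_path x.
Proof.
rewrite /ballot_path /coballot_path size_rev size_map.
apply/(all_iotaP _ _ _)/(all_iotaP _ _ _) => H m; rewrite add0n ltnS => mx.
- have := H (size x - m); rewrite take_rev size_map -map_drop subKn //.
  rewrite !count_rev_negb; apply; lia.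
- rewrite take_rev size_map -map_drop !count_rev_negb; apply: H; lia.
Qed.

End WordsAsPaths.

Definition relabel_invariant (T : Type) (F : seq nat -> T) :=
  forall (f : nat -> nat) s, {in s &, {mono f : a b / a < b}} -> F (map f s) = F s.

Section WordWeights.
Variables (R : comPzRingType) (y t : R).
Implicit Types (s : seq nat).
Local Open Scope ring_scope.

Definition ballot_word_weight s := ballot_weight y t (steps s).
(* For s <> [::], the weight of rev s in B(xt, y, 1/t) has t-exponent
   size s - desw (rev s) = desw s + 1; the empty word weighs 1. *)
Definition coballot_word_weight s :=
  if s is [::] then 1 else coballot_weight y t (steps s).

Lemma ballot_word_weightE s : uniq s ->
  ballot_word_weight s = if ballot s then y ^+ pkw s * t ^+ desw s else 0.
Proof.
by move=> Us; rewrite /ballot_word_weight /ballot_weight ballot_steps ?pkw_steps ?desw_steps.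
Qed.

Lemma coballot_word_weight_rev s : uniq s -> coballot_word_weight s =
  if ballot (rev s) then y ^+ pkw (rev s) * t ^+ (size s - desw (rev s)) else 0.
Proof.
move=> Us; have Urs : uniq (rev s) by rewrite rev_uniq.
rewrite ballot_steps ?pkw_steps ?desw_steps // steps_rev //.
case: s Us Urs => [|a s] Us Urs; first by rewrite /= mulr1.
rewrite /coballot_word_weight /coballot_weight /path_weight ballot_path_rev_negb.
rewrite peaks_rev_negb count_rev_negb; case: coballot_path => //.
have size_s : count id (steps (a :: s)) + count negb (steps (a :: s)) = size s.
  by rewrite -[size s]/((size (a :: s)).-1) -size_steps -(count_predC id).
by rewrite mulrCA -exprS; congr (_ * t ^+ _); rewrite /= -size_s; lia.
Qed.

Lemma word_cut_decomposition s : uniq s ->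
  \sum_(k < (size s).+1) coballot_word_weight (take k s) * ballot_word_weight (drop k s)
  = (1 + t) * (y ^+ pkw s * t ^+ desw s) - (s == [::])%:R * t.
Proof.
case: s => [_|a s' Us].
  rewrite big_ord_recl big_ord0 /ballot_word_weight /ballot_weight /path_weight.
  by rewrite /pkw /desw /= mulr1n; ring.
set s := a :: s'; rewrite big_ord_recl take0 drop0 mul1r [s == _]/= mul0r subr0.
rewrite pkw_steps // desw_steps // -ballot_cut_decomposition; congr (_ + _).
have -> : size s = (size (steps s)).+1 by rewrite size_steps.
apply: eq_bigr => i _; rewrite lift0.
rewrite -[coballot_word_weight _]/(coballot_weight y t (steps (take i.+1 s))).
by rewrite /ballot_word_weight steps_take steps_drop.
Qed.

Lemma ballot_word_weight_relabel : relabel_invariant ballot_word_weight.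
Proof. by move=> f s f_mono; rewrite /ballot_word_weight steps_map. Qed.

Lemma coballot_word_weight_relabel : relabel_invariant coballot_word_weight.
Proof. by move=> f [|a s] f_mono //; rewrite /coballot_word_weight -(steps_map f_mono). Qed.

End WordWeights.

Definition perm_words n := permutations (iota 0 n).

Lemma mem_perm_words n s : (s \in perm_words n) = perm_eq s (iota 0 n).
Proof. exact: mem_permutations. Qed.

Lemma size_perm_words n : size (perm_words n) = n`!.
Proof. by rewrite size_permutations ?iota_uniq // size_iota. Qed.

Lemma perm_words_uniq n : uniq (perm_words n).
Proof. exact: permutations_uniq. Qed.

Section PermWordsMembers.
Variables (n : nat) (s : seq nat).
Hypothesis s_word : s \in perm_words n.

Lemma perm_word_uniq : uniq s.
Proof. by move: s_word; rewrite mem_perm_words => /perm_uniq ->; apply: iota_uniq. Qed.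

Lemma size_perm_word : size s = n.
Proof. by move: s_word; rewrite mem_perm_words => /perm_size ->; rewrite size_iota. Qed.

End PermWordsMembers.

Lemma nth_word n (p : 'S_n) (i : 'I_n) : nth 0 (word p) i = p i.
Proof. by rewrite /word (nth_map i) ?size_enum_ord // nth_ord_enum. Qed.

Lemma word_inj n : injective (@word n).
Proof. by move=> p q pq; apply/permP => i; apply: val_inj; rewrite /= -!nth_word pq. Qed.

Lemma word_perm_words n (p : 'S_n) : word p \in perm_words n.
Proof.
rewrite mem_perm_words uniq_perm ?iota_uniq //.
  by rewrite map_inj_uniq ?enum_uniq // => i j /val_inj/perm_inj.
move=> i; rewrite mem_iota add0n; apply/mapP/idP; first by case=> j _ ->; apply: ltn_ord.
by move=> lt_in; exists ((p^-1)%g (Ordinal lt_in)); rewrite ?mem_enum ?permKV.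
Qed.

Lemma perm_eq_words n : perm_eq (map (@word n) (enum 'S_n)) (perm_words n).
Proof.
have uniq_words : uniq (map (@word n) (enum 'S_n)).
  by rewrite map_inj_uniq ?enum_uniq //; apply: word_inj.
apply: (uniq_perm uniq_words (perm_words_uniq n)).
apply: (uniq_min_size uniq_words _ _).2.
  by move=> _ /mapP[p _ ->]; apply: word_perm_words.
by rewrite size_map -cardE card_Sn size_perm_words.
Qed.

Section PermWordSums.
Variables (R : pzSemiRingType) (n : nat).
Local Open Scope ring_scope.

Lemma sum_perm_words (F : seq nat -> R) :
  \sum_(p : 'S_n) F (word p) = \sum_(s <- perm_words n) F s.
Proof. by rewrite -(perm_big _ (perm_eq_words n)) big_map big_enum. Qed.

Lemma sum_perm_words_rev (F : seq nat -> R) :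
  \sum_(s <- perm_words n) F s = \sum_(s <- perm_words n) F (rev s).
Proof.
rewrite -(big_map rev xpredT F); apply/perm_big/uniq_perm.
- exact: perm_words_uniq.
- by rewrite map_inj_uniq ?perm_words_uniq //; apply: (can_inj revK).
move=> s; rewrite -[s in RHS]revK; rewrite mem_map; last exact: (can_inj revK).
by rewrite !mem_perm_words perm_rev.
Qed.

End PermWordSums.

Lemma relabel_sorted (T : Type) (F : seq nat -> T) (e a : seq nat) :
  relabel_invariant F -> sorted ltn e -> {subset a <= gtn (size e)} ->
  F (map (nth 0 e) a) = F a.
Proof.
move=> F_inv e_sorted a_lt; apply: F_inv => i j /a_lt i_lt /a_lt j_lt.
have nth_mono := leqW_mono_in (leq_mono_in (sorted_ltn_nth ltn_trans 0 e_sorted)).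
exact: nth_mono.
Qed.

Lemma perm_map_nth (e a : seq nat) :
  perm_eq a (iota 0 (size e)) -> perm_eq (map (nth 0 e) a) e.
Proof.
move/(perm_map (nth 0 e)); rewrite -/(mkseq (nth 0 e) (size e)).
by rewrite mkseq_nth.
Qed.

Lemma perm_iota_lt (a : seq nat) m : perm_eq a (iota 0 m) -> {subset a <= gtn m}.
Proof. by move=> perm_a i; rewrite (perm_mem perm_a) mem_iota. Qed.

Lemma index_map_nth (e a : seq nat) : uniq e -> {subset a <= gtn (size e)} ->
  map (index^~ e) (map (nth 0 e) a) = a.
Proof.
move=> e_uniq a_lt; rewrite -map_comp map_id_in // => i /a_lt i_lt /=.
exact: index_uniq.
Qed.

Lemma mem_allpairs_pair (T1 T2 : eqType) (s1 : seq T1) (s2 : seq T2) x1 x2 :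
  ((x1, x2) \in [seq (a, b) | a <- s1, b <- s2]) = (x1 \in s1) && (x2 \in s2).
Proof.
apply/allpairsP/andP => [[[a b] /= [ha hb [-> ->]]] // | [h1 h2]].
by exists (x1, x2).
Qed.

Lemma enum_filter (T : finType) (A : {pred T}) : enum A = filter (mem A) (enum T).
Proof. by rewrite enumT. Qed.

Section Shuffles.
Variables (n k : nat).
Hypothesis le_kn : k <= n.
Implicit Types (X : {set 'I_n}).

Definition set_seq X : seq nat := [seq val x | x <- enum X].

Lemma mem_set_seq_val X (x : 'I_n) : (val x \in set_seq X) = (x \in X).
Proof. by rewrite mem_map ?mem_enum //; apply: val_inj. Qed.

Lemma set_seq_uniq X : uniq (set_seq X).
Proof. by rewrite map_inj_uniq ?enum_uniq //; apply: val_inj. Qed.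

Lemma size_set_seq X : size (set_seq X) = #|X|.
Proof. by rewrite size_map cardE. Qed.

Lemma set_seq_sorted X : sorted ltn (set_seq X).
Proof.
rewrite sorted_map enum_filter; apply: sorted_filter => [i j l /= |].
  exact: ltn_trans.
by rewrite -sorted_map val_enum_ord iota_ltn_sorted.
Qed.

Lemma set_seq_inj : injective set_seq.
Proof. by move=> X Y XY; apply/setP => x; rewrite -!mem_set_seq_val XY. Qed.

Lemma perm_set_seq_cat X : perm_eq (set_seq X ++ set_seq (~: X)) (iota 0 n).
Proof.
rewrite -map_cat -val_enum_ord; apply: perm_map.
rewrite (enum_filter X) (enum_filter (~: X)).
rewrite (eq_filter (a1 := mem (~: X)) (a2 := predC (mem X))) ?perm_filterC // => x.
by rewrite !inE.
Qed.

Definition shuffle X (ab : seq nat * seq nat) :=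
  map (nth 0 (set_seq X)) ab.1 ++ map (nth 0 (set_seq (~: X))) ab.2.

Definition ksets := enum [set X : {set 'I_n} | #|X| == k].
Definition word_pairs := [seq (a, b) | a <- perm_words k, b <- perm_words (n - k)].
Definition shuffles := [seq shuffle X ab | X <- ksets, ab <- word_pairs].

Lemma size_set_seq_kset X :
  X \in ksets -> size (set_seq X) = k /\ size (set_seq (~: X)) = n - k.
Proof.
rewrite mem_enum inE => /eqP card_X; rewrite !size_set_seq card_X.
have : k + #|~: X| = n by rewrite -card_X cardsC card_ord.
by split => //; lia.
Qed.

Lemma word_pairs_perm_iota ab : ab \in word_pairs ->
  perm_eq ab.1 (iota 0 k) /\ perm_eq ab.2 (iota 0 (n - k)).
Proof. by case: ab => a b; rewrite mem_allpairs_pair !mem_perm_words => /andP. Qed.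

Lemma shuffle_take_drop X ab : X \in ksets -> ab \in word_pairs ->
  take k (shuffle X ab) = map (nth 0 (set_seq X)) ab.1 /\
  drop k (shuffle X ab) = map (nth 0 (set_seq (~: X))) ab.2.
Proof.
move=> /size_set_seq_kset[size_X _] /word_pairs_perm_iota[/perm_size size_a _].
rewrite size_iota in size_a.
by rewrite /shuffle take_size_cat ?drop_size_cat ?size_map.
Qed.

Lemma shuffle_perm_word X ab : X \in ksets -> ab \in word_pairs ->
  shuffle X ab \in perm_words n.
Proof.
move=> /size_set_seq_kset[size_X size_CX] /word_pairs_perm_iota[perm_a perm_b].
rewrite mem_perm_words; apply: perm_trans (perm_set_seq_cat X).
by apply: perm_cat; apply: perm_map_nth; rewrite ?size_X ?size_CX.
Qed.

Lemma shuffle_inj X X' ab ab' : X \in ksets -> X' \in ksets ->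
  ab \in word_pairs -> ab' \in word_pairs ->
  shuffle X ab = shuffle X' ab' -> (X, ab) = (X', ab').
Proof.
move=> kX kX' wab wab' eq_sh.
have [take_ab drop_ab] := shuffle_take_drop kX wab.
have [take_ab' drop_ab'] := shuffle_take_drop kX' wab'.
have [size_X size_CX] := size_set_seq_kset kX.
have [size_X' size_CX'] := size_set_seq_kset kX'.
move: eq_sh take_ab drop_ab take_ab' drop_ab'.
case: ab ab' wab wab' => [a b] [a' b'].
move=> /word_pairs_perm_iota[/= perm_a perm_b] /word_pairs_perm_iota[/= perm_a' perm_b'] ->.
move=> /= -> -> eq_a eq_b.
have XX' : X = X'.
  apply/set_seq_inj/(irr_sorted_eq ltn_trans ltnn (set_seq_sorted _) (set_seq_sorted _)).
  have perm_X : perm_eq (map (nth 0 (set_seq X)) a) (set_seq X).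
    by apply: perm_map_nth; rewrite size_X.
  have perm_X' : perm_eq (map (nth 0 (set_seq X')) a') (set_seq X').
    by apply: perm_map_nth; rewrite size_X'.
  by move=> i; rewrite -(perm_mem perm_X) eq_a (perm_mem perm_X').
subst X'; congr (_, (_, _)).
- have a_lt := perm_iota_lt perm_a; have a'_lt := perm_iota_lt perm_a'.
  rewrite -size_X in a_lt a'_lt.
  by rewrite -(index_map_nth (set_seq_uniq X) a_lt) eq_a index_map_nth ?set_seq_uniq.
- have b_lt := perm_iota_lt perm_b; have b'_lt := perm_iota_lt perm_b'.
  rewrite -size_CX in b_lt b'_lt.
  by rewrite -(index_map_nth (set_seq_uniq _) b_lt) eq_b index_map_nth ?set_seq_uniq.
Qed.

Lemma perm_eq_shuffles : perm_eq shuffles (perm_words n).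
Proof.
have uniq_shuffles : uniq shuffles.
  apply: allpairs_uniq; first exact: enum_uniq.
    apply: allpairs_uniq; [exact: perm_words_uniq | exact: perm_words_uniq |].
    by move=> [a b] [a' b'] _ _ [-> ->].
  move=> [X ab] [X' ab']; rewrite !mem_allpairs_pair => /andP[kX wab] /andP[kX' wab'].
  exact: shuffle_inj.
(* Onto by counting: 'C(n, k) * (k`! * (n - k)`!) = n`!. *)
apply: (uniq_perm uniq_shuffles (perm_words_uniq n)).
apply: (uniq_min_size uniq_shuffles _ _).2.
  by move=> _ /allpairsP[[X ab] /= [kX wab ->]]; apply: shuffle_perm_word.
by rewrite !size_allpairs -cardE card_draws card_ord !size_perm_words bin_fact.
Qed.

Lemma sum_perm_words_split (R : pzSemiRingType) (F G : seq nat -> R) :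
  relabel_invariant F -> relabel_invariant G ->
  (\sum_(p <- perm_words n) F (take k p) * G (drop k p) =
   'C(n, k)%:R * ((\sum_(a <- perm_words k) F a) * \sum_(b <- perm_words (n - k)) G b))%R.
Proof.
move=> F_inv G_inv; rewrite -(perm_big _ perm_eq_shuffles) big_allpairs_dep /=.
rewrite big_seq (eq_bigr (fun=> \sum_(ab <- word_pairs) F ab.1 * G ab.2)%R); last first.
  move=> X kX; rewrite big_seq [RHS]big_seq; apply: eq_bigr => ab wab.
  have [size_X size_CX] := size_set_seq_kset kX.
  have [perm_a perm_b] := word_pairs_perm_iota wab.
  have [-> ->] := shuffle_take_drop kX wab.
  rewrite !relabel_sorted ?set_seq_sorted ?size_X ?size_CX //; exact: perm_iota_lt.
rewrite -big_seq big_allpairs /= -big_distrlr big_enum sumr_const card_draws card_ord.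
by rewrite mulr_natl.
Qed.

End Shuffles.

Local Open Scope ring_scope.

Lemma Bcoef_sub_perm_words k :
  Bcoef_sub k = \sum_(s <- perm_words k) coballot_word_weight yv tv s.
Proof.
pose G s := if ballot s then yv ^+ pkw s * tv ^+ (size s - desw s) else 0.
rewrite /Bcoef_sub big_mkcond (eq_bigr (G \o @word k)) => [|p _]; last first.
  by rewrite /G /= size_map size_enum_ord.
rewrite sum_perm_words sum_perm_words_rev big_seq [RHS]big_seq.
apply: eq_bigr => s ks.
by rewrite coballot_word_weight_rev ?(perm_word_uniq ks) // /G size_rev.
Qed.

Lemma Bcoef_perm_words k :
  Bcoef k = \sum_(s <- perm_words k) ballot_word_weight yv tv s.
Proof.
pose G s := if ballot s then yv ^+ pkw s * tv ^+ desw s else 0.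
rewrite /Bcoef big_mkcond (eq_bigr (G \o @word k)) // sum_perm_words.
rewrite big_seq [RHS]big_seq.
by apply: eq_bigr => s ks; rewrite ballot_word_weightE ?(perm_word_uniq ks).
Qed.

Lemma sum_perm_words_nil (R : pzSemiRingType) n :
  \sum_(s <- perm_words n) (s == [::])%:R = (n == 0)%:R :> R.
Proof.
case: n => [|n]; first by rewrite big_seq1.
by rewrite big_seq big1 // => s /size_perm_word; case: s.
Qed.

Lemma binomial_convolution n :
  \sum_(k < n.+1) 'C(n, k)%:R * (Bcoef_sub k * Bcoef (n - k)) =
  (1 + tv) * Pcoef n - (n == 0)%:R * tv.
Proof.
have split_k (k : 'I_n.+1) : 'C(n, k)%:R * (Bcoef_sub k * Bcoef (n - k)) =
    \sum_(p <- perm_words n)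
      coballot_word_weight yv tv (take k p) * ballot_word_weight yv tv (drop k p).
  rewrite Bcoef_sub_perm_words Bcoef_perm_words sum_perm_words_split //.
  - by rewrite -ltnS.
  - exact: coballot_word_weight_relabel.
  - exact: ballot_word_weight_relabel.
rewrite (eq_bigr _ (fun k _ => split_k k)) exchange_big /= big_seq.
under eq_bigr => p pn.
  have := word_cut_decomposition yv tv (perm_word_uniq pn).
  by rewrite (size_perm_word pn) => ->; over.
rewrite -big_seq sumrB -mulr_sumr -mulr_suml sum_perm_words_nil /Pcoef.
by rewrite (sum_perm_words _ (fun s => yv ^+ pkw s * tv ^+ desw s)).
Qed.

Lemma ogf_coef_mul (F G : nat -> PR) n k : (k <= n)%N ->
  ogf_coef F k * ogf_coef G (n - k) =
  ((n`!)%:R^-1 : rat) *: ('C(n, k)%:R * (F k * G (n - k)%N)).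
Proof.
move=> le_kn; rewrite /ogf_coef -scalerAl -scalerAr scalerA mulr_natl -scaler_nat scalerA.
congr (_ *: _); rewrite -(bin_fact le_kn) !natrM.
have fact_neq0 m : (m`!)%:R != 0 :> rat by rewrite pnatr_eq0 -lt0n fact_gt0.
have bin_neq0 : 'C(n, k)%:R != 0 :> rat by rewrite pnatr_eq0 -lt0n bin_gt0.
by field; rewrite !fact_neq0 bin_neq0.
Qed.

Theorem theorem3p3 (n : nat) :
  \sum_(k < n.+1) ogf_coef Bcoef_sub k * ogf_coef Bcoef (n - k)
  = (1 + tv) * ogf_coef Pcoef n - (n == 0%N)%:R * tv.
Proof.
under eq_bigr => k _ do rewrite ogf_coef_mul 1?leq_ord //.
rewrite -scaler_sumr binomial_convolution scalerBr /ogf_coef scalerAr.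
by case: n => [|n]; rewrite ?invr1 ?scale1r // mul0r !scaler0.
Qed.
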